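(* Let $k\ge1$. The logic $\mathbb{L}_k$ is algebraizable in the sense of Blok and Pigozzi with set of equivalence formulas $\Delta(p_1,p_2)=\{\delta(p_1,p_2)\}$ and set of defining equations $E(p_1)=\{p_1\approx p_1\leftrightarrow p_1\}$; that is, for all variables $p_1,\dots,p_{2n}$: (C1) $\models_k\delta(p_1,p_1)$; (C2) $\delta(p_1,p_2)\models_k\delta(p_2,p_1)$; (C3) $\delta(p_1,p_2),\delta(p_2,p_3)\models_k\delta(p_1,p_3)$; (C4) $\delta(p_1,p_{n+1}),\dots,\delta(p_n,p_{2n})\models_k\delta(\#(p_1,\dots,p_n),\#(p_{n+1},\dots,p_{2n}))$ for every $n$-ary connective $\#$ with $n\ge1$; (C5) $p_1\models_k\delta(p_1,p_1\leftrightarrow p_1)$; (C6) $\delta(p_1,p_1\leftrightarrow p_1)\models_k p_1$.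
   Context: A modal pseudocomplemented De Morgan algebra ($mpM$-algebra) is an algebra $\langle A,\wedge,\vee,\sim,{}^\ast,0,1\rangle$ such that $\langle A,\wedge,\vee,\sim,0,1\rangle$ is a De Morgan algebra (bounded distributive lattice with $\sim\sim x=x$, $\sim(x\vee y)=\sim x\wedge\sim y$), $x^\ast$ is the pseudocomplement of $x$, and $x\vee\sim x\le x\vee x^\ast$. A $\mathcal{C}_k$-algebra ($k\ge1$) is a pair $(A,t)$ with $A$ an $mpM$-algebra and $t$ an $mpM$-automorphism of $A$ with $t^k=\mathrm{id}$. $Fm$ is the set of formulas built from a denumerable set of variables with connectives $\wedge,\vee$ (binary), $\sim,{}^\ast,t$ (unary), $\top,\bot$ (constants); a valuation into $(A,t)$ is a homomorphism $v:Fm\to(A,t)$ (with $v(\top)=1$, $v(\bot)=0$). The $1$-assertional logic $\mathbb{L}_k=\langle Fm,\models_k\rangle$: $\Gamma\models_k\alpha$ iff for every $\mathcal{C}_k$-algebra $(A,t)$ and every valuation $v$, if $v(\gamma)=1$ for all $\gamma\in\Gamma$ then $v(\alpha)=1$. Define $x\to y=\sim\big((\sim(x\vee y))^\ast\wedge(x\vee y)\big)\vee\big((\sim(x\wedge y))^\ast\wedge(x\wedge y)\big)$, $x\leftrightarrow y=(x\to y)\wedge(\sim y\to\sim x)$, and $\delta(p,q)=\bigwedge_{i=0}^{k-1}(t^ip\leftrightarrow t^iq)$. *)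

From HB Require Import structures.
From mathcomp Require Import all_boot all_order.
Set Implicit Arguments. Unset Strict Implicit. Unset Printing Implicit Defensive.
Import Order.TTheory.
Local Open Scope order_scope.

Inductive form : Type :=
| FVar : nat -> form
| FAnd : form -> form -> form
| FOr  : form -> form -> form
| FNeg : form -> form          (* ~ (De Morgan negation) *)
| FPc  : form -> form          (* ^* (pseudocomplement) *)
| FT   : form -> form
| FTop : form
| FBot : form.

Record mpM (d : Order.disp_t) (A : tbDistrLatticeType d) := MpM {
  neg : A -> A;
  pc  : A -> A;
  negK : forall x : A, neg (neg x) = x;
  negJ : forall x y : A, neg (x `|` y) = neg x `&` neg y;
  pcP : forall x y : A, (x `&` y = \bot) <-> (y <= pc x);
  modal : forall x : A, x `|` neg x <= x `|` pc x
}.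

Definition Ck_aut (d : Order.disp_t) (A : tbDistrLatticeType d) (M : mpM A)
    (k : nat) (t : A -> A) : Prop :=
  bijective t /\
  (forall x y, t (x `&` y) = t x `&` t y) /\
  (forall x y, t (x `|` y) = t x `|` t y) /\
  (forall x, t (neg M x) = neg M (t x)) /\
  (forall x, t (pc M x) = pc M (t x)) /\
  t \bot = \bot /\ t \top = \top /\
  (forall x, iter k t x = x).

Fixpoint eval (d : Order.disp_t) (A : tbDistrLatticeType d) (M : mpM A)
    (t : A -> A) (v : nat -> A) (f : form) : A :=
  match f with
  | FVar n => v n
  | FAnd a b => eval M t v a `&` eval M t v b
  | FOr a b => eval M t v a `|` eval M t v b
  | FNeg a => neg M (eval M t v a)
  | FPc a => pc M (eval M t v a)
  | FT a => t (eval M t v a)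
  | FTop => \top
  | FBot => \bot
  end.

(** List membership (Prop-valued; form has no eqType). *)
Fixpoint inl (g : form) (l : seq form) : Prop :=
  match l with [::] => False | a :: l' => a = g \/ inl g l' end.

Definition models (k : nat) (Gamma : seq form) (alpha : form) : Prop :=
  forall (d : Order.disp_t) (A : tbDistrLatticeType d) (M : mpM A)
         (t : A -> A), Ck_aut M k t ->
  forall v : nat -> A,
    (forall g, inl g Gamma -> eval M t v g = \top) ->
    eval M t v alpha = \top.

Definition fimp (x y : form) : form :=
  FOr (FNeg (FAnd (FPc (FNeg (FOr x y))) (FOr x y)))
      (FAnd (FPc (FNeg (FAnd x y))) (FAnd x y)).

Definition fiff (x y : form) : form := FAnd (fimp x y) (fimp (FNeg y) (FNeg x)).

Definition tpow (i : nat) (p : form) : form := iter i FT p.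

Fixpoint bigAnd (l : seq form) : form :=
  match l with
  | [::] => FTop
  | [:: a] => a
  | a :: l' => FAnd a (bigAnd l')
  end.

Definition delta (k : nat) (p q : form) : form :=
  bigAnd [seq fiff (tpow i p) (tpow i q) | i <- iota 0 k].

From Pilot Require Import Defs.
From mathcomp Require Import all_boot all_order.
Set Implicit Arguments. Unset Strict Implicit.
Import Order.TTheory.
Local Open Scope order_scope.

(** Everything rests on one algebraic fact about mpM-algebras: the term
    x <-> y evaluates to 1 exactly when x = y.  The modal operator
    box x = (~x)^* /\ x is Boolean (box x and ~box x are complements), so
    x -> y = 1 says box (x v y) <= x /\ y, and ~y -> ~x = 1 says, after
    negation, x v y <= ~((x /\ y)^* ) v (x /\ y); the modal axiom then
    squeezes x v y below x /\ y, whence x = y.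

    Consequently, for k >= 1 a valuation sends delta(p,q) to 1 iff it sends
    p and q to the same element (the conjunct i = 0 already forces it; the
    remaining conjuncts t^i p <-> t^i q then hold for free).  The conditions
    (C1)-(C4) thus reduce to the reflexivity, symmetry, transitivity and
    congruence of equality (lemma [models_delta]), and (C5)-(C6) to the
    identity p <-> p = 1.  No property of t beyond being a function is used. *)

Section MpMAlgebra.
Variables (d : Order.disp_t) (A : tbDistrLatticeType d) (M : mpM A).
Local Notation neg := (Defs.neg M).
Local Notation pc := (Defs.pc M).
Local Notation negK := (Defs.negK M).
Local Notation negJ := (Defs.negJ M).

Definition box (x : A) : A := pc (neg x) `&` x.
Definition imp (x y : A) : A := neg (box (x `|` y)) `|` box (x `&` y).
Definition iff (x y : A) : A := imp x y `&` imp (neg y) (neg x).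

Lemma negM (x y : A) : neg (x `&` y) = neg x `|` neg y.
Proof. by rewrite -[neg x `|` neg y]negK negJ !negK. Qed.

Lemma neg_anti (x y : A) : x <= y -> neg y <= neg x.
Proof. by move=> /join_idPr <-; rewrite negJ leIl. Qed.

Lemma neg0 : neg \bot = \top.
Proof. by apply/le_anti; rewrite lex1 -[X in X <= _]negK neg_anti ?le0x. Qed.

Lemma le_pc_bot (x z : A) : z <= x -> z <= pc x -> z = \bot.
Proof.
move=> zx zpx; apply/eqP; rewrite -lex0.
by rewrite -[X in _ <= X]((pcP M x (pc x)).2 (lexx _)) lexI zx zpx.
Qed.

Lemma box_meet_neg (x : A) : box x `&` neg (box x) = \bot.
Proof.
rewrite -[x]negK; set y := neg x.
apply: (@le_pc_bot y); last by rewrite /box negK -meetA leIl.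
rewrite /box negK negM negK.
apply: (le_trans (leI2 (leIr (neg y) (pc y)) (lexx (neg (pc y) `|` y)))).
rewrite meetUr leUx leIr andbT -negJ.
by apply: (le_trans (neg_anti (modal M y))); rewrite negJ negK leIr.
Qed.

Lemma neg_box_join (x : A) : neg (box x) `|` box x = \top.
Proof. by rewrite -[_ `|` _]negK negJ negK box_meet_neg neg0. Qed.

Lemma box_le (x y : A) : neg (box x) `|` y = \top -> box x <= y.
Proof.
by move=> h; rewrite -[box x]meetx1 -h meetUr box_meet_neg join0x leIr.
Qed.

Lemma meet_eq1 (x y : A) : x `&` y = \top -> x = \top /\ y = \top.
Proof. by move=> h; split; apply/le_anti; rewrite lex1 -h ?leIl ?leIr. Qed.

(** Hence x <-> x = 1: both implications reduce to ~box x v box x. *)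
Lemma iff_refl (x : A) : iff x x = \top.
Proof. by rewrite /iff /imp !joinxx !meetxx !neg_box_join meetxx. Qed.

(** The modal axiom for ~s gives s <= ~s v (~s)^*, splitting s into
    s /\ ~s, which the third hypothesis and the modal axiom for m put
    below m, and s /\ (~s)^* = box s, which is below m by hypothesis. *)
Lemma box_squeeze (s m : A) :
  m <= s -> box s <= m -> s <= neg (pc m) `|` m -> s <= m.
Proof.
move=> ms boxs_m s_le.
have s_split : s <= neg s `|` pc (neg s).
  by rewrite -[X in X <= _]negK (le_trans _ (modal M (neg s))) ?leUr.
have s_neg_s : s `&` neg s <= m.
  apply: (le_trans (leI2 s_le (lexx (neg s)))).
  rewrite meetUl leUx leIl andbT -negJ.
  have pm_m : m `|` neg m <= pc m `|` s.
    by rewrite (le_trans (modal M m)) // joinC leU2.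
  by rewrite (le_trans (neg_anti pm_m)) // negJ negK leIr.
by rewrite -(meet_l s_split) meetUr leUx s_neg_s meetC.
Qed.

(** The converse: x <-> y = 1 forces x = y, by the squeeze applied to
    s = x v y and m = x /\ y. *)
Lemma iff_eq (x y : A) : iff x y = \top -> x = y.
Proof.
move=> /meet_eq1 [imp_xy imp_nynx].
have boxJ_le : box (x `|` y) <= x `&` y := le_trans (box_le imp_xy) (leIr _ _).
rewrite /imp -negM -negJ [y `&` x]meetC [y `|` x]joinC in imp_nynx.
have J_le : x `|` y <= neg (pc (x `&` y)) `|` (x `&` y).
  have := neg_anti (le_trans (box_le imp_nynx) (leIr _ _)).
  by rewrite /box !negK negM negK.
have := box_squeeze (le_trans (leIl x y) (leUl x y)) boxJ_le J_le.
by rewrite leUx !lexI !lexx /= andbT => /le_anti.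
Qed.

Lemma iff_eq1 (x y : A) : iff x y = \top <-> x = y.
Proof. by split=> [/iff_eq|->]; last exact: iff_refl. Qed.

End MpMAlgebra.

Section Evaluation.
Variables (d : Order.disp_t) (A : tbDistrLatticeType d) (M : mpM A).
Variables (t : A -> A) (v : nat -> A).
Local Notation ev := (eval M t v).

Lemma eval_fiff (x y : form) : ev (fiff x y) = iff M (ev x) (ev y).
Proof. by []. Qed.

Lemma eval_tpow (i : nat) (x : form) : ev (tpow i x) = iter i t (ev x).
Proof. by elim: i => //= i ->. Qed.

Lemma eval_bigAnd (l : seq form) :
  ev (bigAnd l) = \top <-> (forall f, inl f l -> ev f = \top).
Proof.
elim: l => [|a [|b l] IH]; first by split.
  by split=> [h f [<-|]|h] //; apply: h; left.
change (ev a `&` ev (bigAnd (b :: l)) = \top <->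
  (forall f, a = f \/ inl f (b :: l) -> ev f = \top)).
split=> [/meet_eq1 [ha hl] f [<-|/(IH.1 hl)]|h] //.
by rewrite h ?IH.2 ?meetx1 => [|f hf|]; [|apply: h; right|left].
Qed.

Lemma inl_map (F : nat -> form) (s : seq nat) (g : form) :
  inl g [seq F i | i <- s] <-> exists2 i, i \in s & F i = g.
Proof.
elim: s => [|a s IH] /=; first by split=> // [[]].
split=> [[<-|/IH [i si <-]]|[i]]; first by exists a; rewrite ?mem_head.
  by exists i; rewrite // inE si orbT.
by rewrite inE => /orP [/eqP -> <-|si Fi]; [left|right; apply/IH; exists i].
Qed.

Lemma eval_delta (k : nat) (x y : form) : (1 <= k)%N ->
  ev (delta k x y) = \top <-> ev x = ev y.
Proof.
move=> k_gt0; split=> [/eval_bigAnd delta1|exy].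
  apply/(iff_eq1 M); rewrite -eval_fiff; apply/delta1/inl_map.
  by exists 0%N; rewrite ?mem_iota.
apply/eval_bigAnd => _ /inl_map [i _ <-].
by rewrite eval_fiff !eval_tpow exy iff_refl.
Qed.

Lemma eval_delta_fiff_self (k : nat) (x : form) : (1 <= k)%N ->
  ev (delta k x (fiff x x)) = \top <-> ev x = \top.
Proof.
move=> k_gt0; apply: (iff_trans (eval_delta _ _ k_gt0)).
by rewrite eval_fiff iff_refl.
Qed.

Fixpoint eqs_hold (ps : seq (form * form)) : Prop :=
  if ps is a :: ps' then ev a.1 = ev a.2 /\ eqs_hold ps' else True.

Lemma eqs_hold_deltas (k : nat) (ps : seq (form * form)) : (1 <= k)%N ->
  (forall g, inl g [seq delta k a.1 a.2 | a <- ps] -> ev g = \top) ->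
  eqs_hold ps.
Proof.
move=> k_gt0; elim: ps => [|a ps IH] //= h; split.
  by apply/(eval_delta _ _ k_gt0)/h; left.
by apply: IH => g hg; apply: h; right.
Qed.

End Evaluation.

Lemma models_delta (k : nat) (ps : seq (form * form)) (x y : form) :
  (1 <= k)%N ->
  (forall (d : Order.disp_t) (A : tbDistrLatticeType d) (M : mpM A)
          (t : A -> A) (v : nat -> A),
     eqs_hold M t v ps -> eval M t v x = eval M t v y) ->
  models k [seq delta k a.1 a.2 | a <- ps] (delta k x y).
Proof.
move=> k_gt0 eq_xy d A M t _ v hyps.
apply/(eval_delta M t v _ _ k_gt0)/eq_xy.
exact: eqs_hold_deltas k_gt0 hyps.
Qed.

Theorem theorem7p6 (k : nat) (hk : (1 <= k)%N) :
  (* (C1) *)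
  (forall p1 : nat, models k [::] (delta k (FVar p1) (FVar p1))) /\
  (* (C2) *)
  (forall p1 p2 : nat,
     models k [:: delta k (FVar p1) (FVar p2)] (delta k (FVar p2) (FVar p1))) /\
  (* (C3) *)
  (forall p1 p2 p3 : nat,
     models k [:: delta k (FVar p1) (FVar p2); delta k (FVar p2) (FVar p3)]
              (delta k (FVar p1) (FVar p3))) /\
  (* (C4) for the binary connectives /\ and v *)
  (forall p1 p2 p3 p4 : nat,
     models k [:: delta k (FVar p1) (FVar p3); delta k (FVar p2) (FVar p4)]
              (delta k (FAnd (FVar p1) (FVar p2)) (FAnd (FVar p3) (FVar p4)))) /\
  (forall p1 p2 p3 p4 : nat,
     models k [:: delta k (FVar p1) (FVar p3); delta k (FVar p2) (FVar p4)]
              (delta k (FOr (FVar p1) (FVar p2)) (FOr (FVar p3) (FVar p4)))) /\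
  (* (C4) for the unary connectives ~, ^*, t *)
  (forall p1 p2 : nat,
     models k [:: delta k (FVar p1) (FVar p2)]
              (delta k (FNeg (FVar p1)) (FNeg (FVar p2)))) /\
  (forall p1 p2 : nat,
     models k [:: delta k (FVar p1) (FVar p2)]
              (delta k (FPc (FVar p1)) (FPc (FVar p2)))) /\
  (forall p1 p2 : nat,
     models k [:: delta k (FVar p1) (FVar p2)]
              (delta k (FT (FVar p1)) (FT (FVar p2)))) /\
  (* (C5) *)
  (forall p1 : nat,
     models k [:: FVar p1] (delta k (FVar p1) (fiff (FVar p1) (FVar p1)))) /\
  (* (C6) *)
  (forall p1 : nat,
     models k [:: delta k (FVar p1) (fiff (FVar p1) (FVar p1))] (FVar p1)).
Proof.
repeat split.
- by move=> p; apply: (models_delta (ps := [::])).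
- move=> p q; apply: (models_delta (ps := [:: (_, _)])) => //.
  by move=> ? ? ? ? ? /= [->].
- move=> p q r.
  apply: (models_delta (ps := [:: (_, _); (_, _)])) => //.
  by move=> ? ? ? ? ? /= [-> [->]].
- move=> p q r s.
  apply: (models_delta (ps := [:: (_, _); (_, _)])) => //.
  by move=> ? ? ? ? ? /= [-> [->]].
- move=> p q r s.
  apply: (models_delta (ps := [:: (_, _); (_, _)])) => //.
  by move=> ? ? ? ? ? /= [-> [->]].
- move=> p q; apply: (models_delta (ps := [:: (_, _)])) => //.
  by move=> ? ? ? ? ? /= [->].
- move=> p q; apply: (models_delta (ps := [:: (_, _)])) => //.
  by move=> ? ? ? ? ? /= [->].
- move=> p q; apply: (models_delta (ps := [:: (_, _)])) => //.
  by move=> ? ? ? ? ? /= [->].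
- move=> p d A M t _ v hyp.
  by apply/(eval_delta_fiff_self M t v _ hk); apply: hyp; left.
- move=> p d A M t _ v hyp.
  by apply/(eval_delta_fiff_self M t v _ hk); apply: hyp; left.
Qed.
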